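(* Let $S$ and $A$ be finite-dimensional quantum systems with Hilbert spaces $\mathcal H_S\cong\mathbb C^{d_S}$ and $\mathcal H_A\cong\mathbb C^{d_A}$, and let $H_S=\sum_{k=1}^{d_S}\epsilon_k|\epsilon_k\rangle\langle\epsilon_k|$ with $\epsilon_1<\epsilon_2<\dots<\epsilon_{d_S}$. Fix a real number $r\neq 0$ and the utility function $u(w)=\frac{1}{r}(1-e^{-rw})$. Let $\rho_{SA}$ be a density matrix on $\mathcal H_S\otimes\mathcal H_A$, $\rho_S=\mathrm{Tr}_A\rho_{SA}$, and let $\{|a\rangle\}_{a=1}^{d_A}$ be any orthonormal basis of $\mathcal H_A$ with projectors $\Pi^A_a=|a\rangle\langle a|$. Write the spectral decompositions $e^{-rH_S/2}\rho_S e^{-rH_S/2}=\sum_k u_k|u_k\rangle\langle u_k|$ with $u_1\ge u_2\ge\dots$, and, for each $a$ with $p_a>0$, $e^{-rH_S/2}\rho_{S|a}e^{-rH_S/2}=\sum_k u^a_k|u^a_k\rangle\langle u^a_k|$ with $u^a_1\ge u^a_2\ge\dots$. Set $y_k=e^{r\epsilon_k}/r$ (so $y_k<y_{k+1}$), $\tilde H_S=\sum_k y_k|u_k\rangle\langle u_k|$ and $\tilde\rho_{S|a}=e^{-rH_S/2}\rho_{S|a}e^{-rH_S/2}$. Then $$\mathcal U_{\{\Pi^A_a\}}(\rho_{SA})-\mathcal U(\rho_S)=\sum_{a:\,p_a>0}p_a\,\tilde{\mathcal E}(\tilde\rho_{S|a})\ge 0,$$ where $\tilde{\mathcal E}(\tilde\rho_{S|a})$,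 the ergotropy of the (non-normalized) operator $\tilde\rho_{S|a}$ with respect to $\tilde H_S$, is given explicitly by $$\tilde{\mathcal E}(\tilde\rho_{S|a})=\sum_{k,j}u^a_j\left(|\langle u_k|u^a_j\rangle|^2-\delta_{j,k}\right)y_k .$$
   Context: Conditional states: for an orthonormal basis $\{|a\rangle\}$ of $\mathcal H_A$, $p_a=\mathrm{Tr}[(I^S\otimes\Pi^A_a)\rho_{SA}]$ and, when $p_a>0$, $\rho_{S|a}=\mathrm{Tr}_A[(I^S\otimes\Pi^A_a)\rho_{SA}(I^S\otimes\Pi^A_a)]/p_a$. For a density matrix $\rho$ on $\mathcal H_S$ and a unitary $U$, the expected utility (with respect to the symmetric work quasiprobability) is $$\langle u(w)\rangle_{\rho,U}=\sum_{i,j,k}\mathrm{Re}\big(\langle\epsilon_i|\rho|\epsilon_j\rangle\langle\epsilon_j|U^\dagger|\epsilon_k\rangle\langle\epsilon_k|U|\epsilon_i\rangle\big)\,u\!\left(\tfrac{\epsilon_i+\epsilon_j}{2}-\epsilon_k\right),$$ the optimal expected utility is $\mathcal U(\rho)=\max_{U}\langle u(w)\rangle_{\rho,U}$ (maximum over unitaries on $\mathcal H_S$), and the daemonic expected utility is $\mathcal U_{\{\Pi^A_a\}}(\rho_{SA})=\sum_{a:\,p_a>0}p_a\,\mathcal U(\rho_{S|a})$. The ergotropy of a positive semidefinite operator $X$ with respect to a Hermitian operator $K$ is $\max_V\big(\mathrm{Tr}[KX]-\mathrm{Tr}[KVXV^\dagger]\big)$ over unitaries $V$. *)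

From HB Require Import structures.
From mathcomp Require Import all_boot all_order all_algebra.
From mathcomp Require Import complex mxtens.
From mathcomp Require Import classical_sets reals.
From mathcomp Require Import sequences exp.

Set Implicit Arguments.
Unset Strict Implicit.
Unset Printing Implicit Defensive.

Import Order.TTheory GRing.Theory Num.Theory.
Local Open Scope ring_scope.
Local Open Scope complex_scope.
Local Open Scope classical_set_scope.

Section QDefs.
Variable R : realType.
Local Notation C := (R[i]).

Definition adj {m n} (M : 'M[C]_(m, n)) : 'M[C]_(n, m) := map_mx Num.conj (M^T).

Definition hermitian {n} (M : 'M[C]_n) : Prop := adj M = M.

Definition psd {n} (M : 'M[C]_n) : Prop :=
  hermitian M /\ forall v : 'cV[C]_n, 0 <= (adj v *m M *m v) 0 0.

Definition density {n} (M : 'M[C]_n) : Prop := psd M /\ \tr M = 1.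

Definition unitary {n} (U : 'M[C]_n) : Prop := U \is unitarymx.

Definition RC (x : R) : C := x%:C.

Definition diagR {n} (d : 'I_n -> R) : 'M[C]_n := diag_mx (\row_k RC (d k)).

Definition sqnorm (z : C) : R := (complex.Re z) ^+ 2 + (complex.Im z) ^+ 2.

Definition utility (r w : R) : R := (1 - expR (- (r * w))) / r.

(* H_S = sum_k eps_k |eps_k><eps_k|, |eps_k> = k-th column of the unitary E.
   <eps_i| X |eps_j> = (adj E *m X *m E) i j. *)
Definition melt {n} (E X : 'M[C]_n) (i j : 'I_n) : C := (adj E *m X *m E) i j.

(* expected utility <u(w)>_{rho,U} w.r.t. the symmetric work quasiprobability *)
Definition exp_utility (r : R) {n} (E : 'M[C]_n) (eps : 'I_n -> R)
    (rho U : 'M[C]_n) : R :=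
  \sum_(i < n) \sum_(j < n) \sum_(k < n)
    complex.Re (melt E rho i j * melt E (adj U) j k * melt E U k i)
    * utility r ((eps i + eps j) / 2 - eps k).

(* optimal expected utility: max over unitaries (written as sup; the max is
   attained by compactness of the unitary group) *)
Definition opt_utility (r : R) {n} (E : 'M[C]_n) (eps : 'I_n -> R)
    (rho : 'M[C]_n) : R :=
  sup [set x : R | exists U : 'M[C]_n, unitary U /\ x = exp_utility r E eps rho U].

(* partial trace over A of an operator on H_S (x) H_A, with the index of
   |i> (x) |a> being mxtens_index (i, a) (the convention of *t) *)
Definition ptraceA {dS dA} (M : 'M[C]_(dS * dA)) : 'M[C]_dS :=
  \matrix_(i, j) \sum_(b < dA) M (mxtens_index (i, b)) (mxtens_index (j, b)).

(* projector |a><a|, |a> = a-th column of the unitary B *)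
Definition projA {dA} (B : 'M[C]_dA) (a : 'I_dA) : 'M[C]_dA :=
  col a B *m adj (col a B).

Definition liftA {dS dA} (B : 'M[C]_dA) (a : 'I_dA) : 'M[C]_(dS * dA) :=
  (1%:M : 'M[C]_dS) *t projA B a.

(* p_a = Tr[(I (x) Pi_a) rho] (real since rho is a density matrix) *)
Definition prob {dS dA} (B : 'M[C]_dA) (rho : 'M[C]_(dS * dA)) (a : 'I_dA) : R :=
  complex.Re (\tr (liftA B a *m rho)).

Definition cond_state {dS dA} (B : 'M[C]_dA) (rho : 'M[C]_(dS * dA)) (a : 'I_dA)
    : 'M[C]_dS :=
  RC ((prob B rho a)^-1) *: ptraceA (liftA B a *m rho *m liftA B a).

Definition daemonic_utility (r : R) {dS dA} (E : 'M[C]_dS) (eps : 'I_dS -> R)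
    (B : 'M[C]_dA) (rho : 'M[C]_(dS * dA)) : R :=
  \sum_(a < dA | 0 < prob B rho a) prob B rho a * opt_utility r E eps (cond_state B rho a).

Definition ergotropy {n} (K X : 'M[C]_n) : R :=
  sup [set x : R | exists V : 'M[C]_n, unitary V /\
        x = complex.Re (\tr (K *m X)) - complex.Re (\tr (K *m V *m X *m adj V))].

Definition expH (r : R) {n} (E : 'M[C]_n) (eps : 'I_n -> R) : 'M[C]_n :=
  E *m diagR (fun k => expR (- (r * eps k) / 2)) *m adj E.

Definition spec_decomp {n} (M W : 'M[C]_n) (u : 'I_n -> R) : Prop :=
  unitary W /\ (forall i j : 'I_n, (i <= j)%N -> u j <= u i) /\
  M = W *m diagR u *m adj W.

End QDefs.

From Pilot Require Import Defs.
From HB Require Import structures.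
From mathcomp Require Import all_boot all_order all_algebra.
From mathcomp Require Import complex mxtens.
From mathcomp Require spectral.
From mathcomp Require Import classical_sets reals sequences exp.
From mathcomp Require Import ring lra zify.

(* Since e^(-r w) factorises over the three energies entering the symmetric
   work quasiprobability, the expected utility of rho under U equals
   Tr rho / r - Tr[K_U X], where X = e^(-rH/2) rho e^(-rH/2) and K_U is the
   unitary conjugate U^dag e^(rH) U / r of diag(y), y_k = e^(r eps_k) / r
   nondecreasing.  Minimising Tr[K X] over the unitary orbit is von Neumann's
   trace inequality: the overlap matrix |<v_k|w_j>|^2 of two orthonormal bases
   is doubly stochastic, so by the rearrangement inequality the minimum pairs
   the increasing y with the decreasing eigenvalues of X, and it is attained
   by aligning the eigenbases.  The same minimum is the passive energy in the
   ergotropy, so for any H~ = W diag(y) W^dag the optimal utility of rho is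
   Tr rho / r - Tr[H~ X] + E~(X), and E~ vanishes on rho_S when W diagonalises
   its X.  As sum_a p_a rho_{S|a} = rho_S and the first two terms are linear in
   rho, the daemonic gain is the p-average of the ergotropies. *)

Set Implicit Arguments.
Unset Strict Implicit.
Unset Printing Implicit Defensive.

Import Order.TTheory GRing.Theory Num.Theory.
Local Open Scope ring_scope.

Section BigDelta.
Variable R : comPzSemiRingType.

Lemma sum_delta n (f : 'I_n -> R) x : \sum_k (x == k)%:R * f k = f x.
Proof.
rewrite (bigD1 x) //= eqxx mul1r big1 ?addr0 // => k.
by rewrite eq_sym => /negPf ->; rewrite mul0r.
Qed.

Lemma sum_delta2 n (f : 'I_n -> R) x y c :
  \sum_k ((x == k)%:R + (y == k)%:R * c) * f k = f x + c * f y.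
Proof.
under eq_bigr do rewrite mulrDl -mulrA mulrCA.
by rewrite big_split /= sum_delta -mulr_sumr sum_delta.
Qed.

End BigDelta.

Section MatrixTrace.
Variable R : comPzRingType.

Lemma mxtrace_mul3 n (A B D : 'M[R]_n) :
  \tr (A *m B *m D) = \sum_i \sum_j \sum_k A i j * B j k * D k i.
Proof.
apply: eq_bigr => i _; rewrite mxE exchange_big; apply: eq_bigr => k _.
by rewrite mxE mulr_suml.
Qed.

Lemma mxtrace_sandwich n (H D X : 'M[R]_n) :
  \tr (H *m (D *m X *m D)) = \tr (D *m H *m D *m X).
Proof. by rewrite !mulmxA mxtrace_mulC !mulmxA. Qed.

End MatrixTrace.

Section DoublyStochastic.
Variable R : realDomainType.

Lemma abel_sum_ge0 n (y g : nat -> R) :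
  (forall i j, (i <= j < n)%N -> y i <= y j) ->
  (forall m, (m <= n)%N -> \sum_(k < m) g k <= 0) ->
  \sum_(k < n) g k = 0 ->
  0 <= \sum_(k < n) y k * g k.
Proof.
move=> ymon Gle0 Gn0.
have partial m : (m < n)%N -> y m * \sum_(k < m.+1) g k <= \sum_(k < m.+1) y k * g k.
  elim: m => [|m IHm] ltmn; first by rewrite !big_ord1.
  rewrite [in X in _ <= X]big_ord_recr [in X in _ * X]big_ord_recr /=.
  have ltmn' : (m < n)%N by apply: ltn_trans ltmn.
  have le_y : y m <= y m.+1 by apply: ymon; lia.
  move: (Gle0 m.+1 ltmn') (IHm ltmn').
  move: (\sum_(k < m.+1) g k) (\sum_(k < m.+1) y k * g k) => G S; nra.
case: n ymon Gle0 Gn0 partial => [|n] _ _ Gn0 partial; first by rewrite big_ord0.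
by have := partial n (ltnSn n); rewrite Gn0 mulr0.
Qed.

Lemma sum_weighted_le_prefix n m (u c : nat -> R) :
  (m <= n)%N ->
  (forall i j, (i <= j < n)%N -> u j <= u i) ->
  (forall j, (j < n)%N -> 0 <= c j <= 1) ->
  \sum_(j < n) c j = m%:R ->
  \sum_(j < n) u j * c j <= \sum_(j < m) u j.
Proof.
move=> lemn umon c01 csum.
have widen (F : nat -> R) : \sum_(j < m) F j = \sum_(j < n) F j * (j < m)%N%:R.
  rewrite (big_ord_widen n F lemn) big_mkcond /=; apply: eq_bigr => j _.
  by case: ltnP; rewrite ?mulr1 ?mulr0.
have ind_sum : \sum_(j < n) ((j < m)%N%:R : R) = m%:R.
  have := widen (fun=> 1); rewrite sumr_const card_ord => ->.
  by apply: eq_bigr => j _; rewrite mul1r.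
(* With [t := u (m - 1)], [u j - t] and [(j < m) - c j] never have opposite signs. *)
pose t := u m.-1.
rewrite widen -subr_ge0 -sumrB.
have -> : \sum_(j < n) (u j * (j < m)%N%:R - u j * c j) =
          \sum_(j < n) (u j - t) * ((j < m)%N%:R - c j).
  transitivity (\sum_(j < n) ((u j - t) * ((j < m)%N%:R - c j) + t * ((j < m)%N%:R - c j))).
    by apply: eq_bigr => j _; ring.
  by rewrite big_split /= -mulr_sumr sumrB ind_sum csum subrr mulr0 addr0.
apply: sumr_ge0 => j _; have ltjn := ltn_ord j.
have /andP[c_ge0 c_le1] := c01 j ltjn.
case: ltnP => [ltjm | lemj].
  by apply: mulr_ge0; rewrite subr_ge0 // umon //; lia.
by apply: mulr_le0; rewrite ?sub0r ?oppr_le0 // subr_le0 umon //; lia.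
Qed.

Lemma doubly_stochastic_rearrangement_nat n (y u : nat -> R) (D : nat -> nat -> R) :
  (forall i j, (i <= j < n)%N -> y i <= y j) ->
  (forall i j, (i <= j < n)%N -> u j <= u i) ->
  (forall k j, (k < n)%N -> (j < n)%N -> 0 <= D k j) ->
  (forall k, (k < n)%N -> \sum_(j < n) D k j = 1) ->
  (forall j, (j < n)%N -> \sum_(k < n) D k j = 1) ->
  \sum_(k < n) y k * u k <= \sum_(k < n) \sum_(j < n) y k * u j * D k j.
Proof.
move=> ymon umon D_ge0 rowD colD.
(* Abel summation against [y]: the partial sums of [g] are nonpositive because the
   first [m] rows of [D] give column weights in [0, 1] of total mass [m]. *)
pose g k := \sum_(j < n) u j * D k j - u k.
have sum_g m : \sum_(k < m) g k = \sum_(j < n) u j * \sum_(k < m) D k j - \sum_(k < m) u k.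
  by rewrite sumrB exchange_big; congr (_ - _); apply: eq_bigr => j _; rewrite mulr_sumr.
have -> : \sum_(k < n) \sum_(j < n) y k * u j * D k j =
          \sum_(k < n) y k * g k + \sum_(k < n) y k * u k.
  rewrite -big_split; apply: eq_bigr => k _ /=; rewrite mulrBr subrK mulr_sumr.
  by apply: eq_bigr => j _; rewrite mulrA.
rewrite lerDr.
apply: (@abel_sum_ge0 n y g) => // [m lemn|]; last first.
  by rewrite sum_g; under eq_bigr => j _ do rewrite colD // mulr1; rewrite subrr.
rewrite sum_g subr_le0.
apply: (sum_weighted_le_prefix (c := fun j => \sum_(k < m) D k j)) => // [j ltjn|].
  rewrite sumr_ge0 => [|k _]; last by apply: D_ge0 => //; apply: leq_trans lemn.
  rewrite -(colD j ltjn) (big_ord_widen n (D^~ j) lemn) big_mkcond ler_sum //= => k _.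
  by case: ifP => // _; apply: D_ge0.
rewrite exchange_big /= -[m in RHS]card_ord -sumr_const; apply: eq_bigr => k _.
by apply: rowD; apply: leq_trans lemn.
Qed.

Lemma doubly_stochastic_rearrangement n (y u : 'I_n -> R) (D : 'I_n -> 'I_n -> R) :
  {homo y : i j / (i <= j)%N >-> i <= j} ->
  {homo u : i j / (i <= j)%N >-> j <= i} ->
  (forall k j, 0 <= D k j) ->
  (forall k, \sum_j D k j = 1) ->
  (forall j, \sum_k D k j = 1) ->
  \sum_k y k * u k <= \sum_k \sum_j y k * u j * D k j.
Proof.
case: n y u D => [|n] y u D ymon umon D_ge0 rowD colD; first by rewrite !big_ord0.
pose f k : 'I_n.+1 := inord k.
have fK (i : 'I_n.+1) : f i = i := inord_val i.
have mono_f i j : (i <= j < n.+1)%N -> (f i <= f j)%N.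
  by case/andP=> leij ltjn; rewrite /f !inordK //; apply: leq_ltn_trans ltjn.
have -> : \sum_k y k * u k = \sum_(k < n.+1) y (f k) * u (f k).
  by apply: eq_bigr => k _; rewrite fK.
have -> : \sum_k \sum_j y k * u j * D k j =
          \sum_(k < n.+1) \sum_(j < n.+1) y (f k) * u (f j) * D (f k) (f j).
  by apply: eq_bigr => k _; apply: eq_bigr => j _; rewrite !fK.
apply: (doubly_stochastic_rearrangement_nat (y := y \o f) (u := u \o f)
         (D := fun k j => D (f k) (f j))).
- by move=> i j /mono_f; apply: ymon.
- by move=> i j /mono_f; apply: umon.
- by [].
- by move=> k _; under eq_bigr do rewrite fK.
- by move=> j _; under eq_bigr do rewrite fK.
Qed.

End DoublyStochastic.

Section ComplexMatrices.
Variable R : realType.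
Local Notation C := R[i].

Lemma adjK m n (A : 'M[C]_(m, n)) : adj (adj A) = A.
Proof. exact: spectral.trmxCK. Qed.

Lemma adjM m n p (A : 'M[C]_(m, n)) (B : 'M[C]_(n, p)) : adj (A *m B) = adj B *m adj A.
Proof. by rewrite /adj trmx_mul map_mxM. Qed.

Lemma unitary_adj n (U : 'M[C]_n) : unitary U -> unitary (adj U).
Proof. by rewrite /unitary spectral.trmxC_unitary. Qed.

Lemma unitaryM n (U V : 'M[C]_n) : unitary U -> unitary V -> unitary (U *m V).
Proof. exact: spectral.mul_unitarymx. Qed.

Lemma unitary_mul_adj n (U : 'M[C]_n) : unitary U -> U *m adj U = 1%:M.
Proof. by move/spectral.unitarymxP. Qed.

Lemma unitary_adj_mul n (U : 'M[C]_n) : unitary U -> adj U *m U = 1%:M.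
Proof. by move=> uU; rewrite -[adj U]mul1mx spectral.mulmxKtV. Qed.

Lemma RCM (a b : R) : RC (a * b) = RC a * RC b.
Proof. exact: rmorphM. Qed.

Lemma RC_sum I (r : seq I) (P : pred I) (F : I -> R) :
  RC (\sum_(i <- r | P i) F i) = \sum_(i <- r | P i) RC (F i).
Proof. exact: rmorph_sum. Qed.

Lemma Re_sum I (r : seq I) (P : pred I) (F : I -> C) :
  complex.Re (\sum_(i <- r | P i) F i) = \sum_(i <- r | P i) complex.Re (F i).
Proof. exact: raddf_sum. Qed.

Lemma Re_RCM (x : R) (z : C) : complex.Re (RC x * z) = x * complex.Re z.
Proof. by case: z => a b; rewrite /= mul0r subr0. Qed.

Lemma RC_sqnorm (z : C) : RC (sqnorm z) = z * Num.conj z.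
Proof. by rewrite /RC /sqnorm add_Re2_Im2 normCK. Qed.

Lemma sqnorm_ge0 (z : C) : 0 <= sqnorm z.
Proof. by rewrite addr_ge0 ?sqr_ge0. Qed.

Lemma sqnorm_scalar1 n (k j : 'I_n) : sqnorm ((1%:M : 'M[C]_n) k j) = (k == j)%:R.
Proof. by rewrite mxE; case: (k == j); rewrite /sqnorm /= ?expr1n ?expr0n ?addr0. Qed.

Lemma unitary_sum_sqnorm_row n (U : 'M[C]_n) k :
  unitary U -> \sum_j sqnorm (U k j) = 1.
Proof.
move=> /unitary_mul_adj /matrixP /(_ k k); rewrite !mxE eqxx => UUk.
apply: complexI; rewrite rmorph_sum -[RHS]UUk; apply: eq_bigr => j _.
by rewrite !mxE -RC_sqnorm.
Qed.

Lemma unitary_sum_sqnorm_col n (U : 'M[C]_n) j :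
  unitary U -> \sum_k sqnorm (U k j) = 1.
Proof.
move=> /unitary_adj_mul /matrixP /(_ j j); rewrite !mxE eqxx => UUj.
apply: complexI; rewrite rmorph_sum -[RHS]UUj; apply: eq_bigr => k _.
by rewrite !mxE mulrC -RC_sqnorm.
Qed.

End ComplexMatrices.

Section TraceInequality.
Variable R : realType.
Local Notation C := R[i].

Lemma tr_conjdiag_mul n (A B : 'M[C]_n) (y u : 'I_n -> R) :
  \tr (A *m diagR y *m adj A *m (B *m diagR u *m adj B)) =
  RC (\sum_k \sum_j y k * u j * sqnorm ((adj A *m B) k j)).
Proof.
set M := adj A *m B.
have -> : \tr (A *m diagR y *m adj A *m (B *m diagR u *m adj B)) =
          \tr (diagR y *m M *m diagR u *m adj M).
  by rewrite /M adjM adjK -!mulmxA mxtrace_mulC -!mulmxA.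
clearbody M; rewrite RC_sum; apply: eq_bigr => k _; rewrite RC_sum mxE.
apply: eq_bigr => j _.
by rewrite /diagR mul_mx_diag mul_diag_mx !mxE !RCM RC_sqnorm; ring.
Qed.

Lemma tr_conjdiag_mul_ge n (A B : 'M[C]_n) (y u : 'I_n -> R) :
  unitary A -> unitary B ->
  {homo y : i j / (i <= j)%N >-> i <= j} ->
  {homo u : i j / (i <= j)%N >-> j <= i} ->
  \sum_k y k * u k <= complex.Re (\tr (A *m diagR y *m adj A *m (B *m diagR u *m adj B))).
Proof.
move=> uA uB ymon umon; rewrite tr_conjdiag_mul /=.
have uAB : unitary (adj A *m B) by apply: unitaryM (unitary_adj uA) uB.
apply: doubly_stochastic_rearrangement => // [k j|k|j].
- exact: sqnorm_ge0.
- exact: unitary_sum_sqnorm_row.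
- exact: unitary_sum_sqnorm_col.
Qed.

Lemma tr_conjdiag_mul_same n (A : 'M[C]_n) (y u : 'I_n -> R) :
  unitary A ->
  complex.Re (\tr (A *m diagR y *m adj A *m (A *m diagR u *m adj A))) = \sum_k y k * u k.
Proof.
move=> uA; rewrite tr_conjdiag_mul /= unitary_adj_mul //; apply: eq_bigr => k _.
rewrite (bigD1 k) //= sqnorm_scalar1 eqxx mulr1 big1 ?addr0 // => j /negPf neq_jk.
by rewrite sqnorm_scalar1 eq_sym neq_jk mulr0.
Qed.

End TraceInequality.

Section Optimization.
Variable R : realType.
Local Notation C := R[i].

Lemma sup_attained (S : set R) x : S x -> ubound S x -> sup S = x.
Proof.
move=> Sx ubx; apply/le_anti; rewrite ge_sup //=; last by exists x.
by apply: ub_le_sup => //; exists x.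
Qed.

Lemma ergotropy_conjdiag_tr n (W Wa : 'M[C]_n) (y u : 'I_n -> R) :
  unitary W -> unitary Wa ->
  {homo y : i j / (i <= j)%N >-> i <= j} ->
  {homo u : i j / (i <= j)%N >-> j <= i} ->
  ergotropy (W *m diagR y *m adj W) (Wa *m diagR u *m adj Wa) =
  complex.Re (\tr (W *m diagR y *m adj W *m (Wa *m diagR u *m adj Wa)))
  - \sum_k y k * u k.
Proof.
move=> uW uWa ymon umon.
have conjE V : W *m diagR y *m adj W *m V *m (Wa *m diagR u *m adj Wa) *m adj V =
               W *m diagR y *m adj W *m (V *m Wa *m diagR u *m adj (V *m Wa)).
  by rewrite adjM !mulmxA.
apply: sup_attained.
  exists (W *m adj Wa); split; first exact: unitaryM uW (unitary_adj uWa).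
  rewrite conjE.
  have -> : W *m adj Wa *m Wa = W by rewrite -mulmxA unitary_adj_mul ?mulmx1.
  by rewrite tr_conjdiag_mul_same.
move=> _ [V [uV ->]]; rewrite conjE lerD2l lerN2.
exact: tr_conjdiag_mul_ge (unitaryM uV uWa) ymon umon.
Qed.

Lemma ergotropy_conjdiag_sum n (W Wa : 'M[C]_n) (y u : 'I_n -> R) :
  unitary W -> unitary Wa ->
  {homo y : i j / (i <= j)%N >-> i <= j} ->
  {homo u : i j / (i <= j)%N >-> j <= i} ->
  ergotropy (W *m diagR y *m adj W) (Wa *m diagR u *m adj Wa) =
  \sum_k \sum_j u j * (sqnorm ((adj W *m Wa) k j) - (j == k)%:R) * y k.
Proof.
move=> uW uWa ymon umon; rewrite ergotropy_conjdiag_tr // tr_conjdiag_mul /= -sumrB.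
apply: eq_bigr => k _; rewrite -[y k * u k](sum_delta (fun j => y k * u j)) -sumrB.
by apply: eq_bigr => j _; rewrite eq_sym; ring.
Qed.

Lemma expR_div_homo (r : R) n (eps : 'I_n -> R) : r != 0 ->
  {homo eps : k l / (k < l)%N >-> k < l} ->
  {homo (fun k => expR (r * eps k) / r) : k l / (k <= l)%N >-> k <= l}.
Proof.
move=> r0 eps_lt k l; rewrite leq_eqVlt => /orP[/eqP/val_inj -> // | /eps_lt/ltW le_eps].
case: (ltrgtP r 0) => [r_lt0|r_gt0|r_eq0]; last by rewrite r_eq0 eqxx in r0.
  by apply: ler_wnM2r; [rewrite invr_le0 ltW | rewrite ler_expR ler_nM2l].
by apply: ler_wpM2r; [rewrite invr_ge0 ltW | rewrite ler_expR ler_pM2l].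
Qed.

Lemma utility_split (r a b c : R) : r != 0 ->
  utility r ((a + b) / 2 - c) =
  r^-1 - expR (- (r * a) / 2) * expR (- (r * b) / 2) * (expR (r * c) / r).
Proof.
move=> r0; rewrite /utility.
have -> : - (r * ((a + b) / 2 - c)) = - (r * a) / 2 + - (r * b) / 2 + r * c by field.
by rewrite !expRD; field.
Qed.

Lemma exp_utility_sum_tr (r : R) n (eps : 'I_n -> R) (P Q' Q : 'M[C]_n) : r != 0 ->
  let D := diagR (fun k => expR (- (r * eps k) / 2)) in
  \sum_i \sum_j \sum_k
    complex.Re (P i j * Q' j k * Q k i) * utility r ((eps i + eps j) / 2 - eps k) =
  complex.Re (\tr (P *m Q' *m Q)) / r -
  complex.Re (\tr (D *m P *m D *m Q' *m (diagR (fun k => expR (r * eps k) / r) *m Q))).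
Proof.
move=> r0 D; rewrite !mxtrace_mul3 !Re_sum mulr_suml -sumrB; apply: eq_bigr => i _.
rewrite !Re_sum mulr_suml -sumrB; apply: eq_bigr => j _.
rewrite !Re_sum mulr_suml -sumrB; apply: eq_bigr => k _.
rewrite utility_split // /D /diagR mul_mx_diag mul_diag_mx mul_diag_mx !mxE.
set ei := expR _; set ej := expR _; set fk := expR _ / r.
have -> : RC ei * P i j * RC ej * Q' j k * (RC fk * Q k i) =
          RC (ei * ej * fk) * (P i j * Q' j k * Q k i) by rewrite !RCM; ring.
by rewrite Re_RCM; field.
Qed.

Lemma exp_utility_tr (r : R) n (E : 'M[C]_n) (eps : 'I_n -> R) (rho U : 'M[C]_n) :
  r != 0 -> unitary E -> unitary U ->
  exp_utility r E eps rho U =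
  complex.Re (\tr rho) / r -
  complex.Re (\tr (adj U *m E *m diagR (fun k => expR (r * eps k) / r) *m adj (adj U *m E)
                   *m (expH r E eps *m rho *m expH r E eps))).
Proof.
move=> r0 uE uU; rewrite /exp_utility /melt (exp_utility_sum_tr _ _ _ _ r0).
have -> : \tr (adj E *m rho *m E *m (adj E *m adj U *m E) *m (adj E *m U *m E)) = \tr rho.
  rewrite !mulmxA !(spectral.mulmxtVK _ uE) (spectral.mulmxKtV _ uU) //.
  by rewrite -mulmxA mxtrace_mulC (spectral.mulmxtVK _ uE).
have cyclic (De Df : 'M[C]_n) :
    \tr (De *m (adj E *m rho *m E) *m De *m (adj E *m adj U *m E) *m (Df *m (adj E *m U *m E))) =
    \tr (adj U *m E *m Df *m adj (adj U *m E) *m (E *m De *m adj E *m rho *m (E *m De *m adj E))).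
  by rewrite [RHS]mxtrace_mulC adjM adjK -!mulmxA [RHS]mxtrace_mulC -!mulmxA.
by rewrite cyclic.
Qed.

Lemma opt_utility_conjdiag (r : R) n (E : 'M[C]_n) (eps : 'I_n -> R) (rho W : 'M[C]_n)
    (u : 'I_n -> R) :
  r != 0 -> unitary E ->
  {homo (fun k => expR (r * eps k) / r) : k l / (k <= l)%N >-> k <= l} ->
  spec_decomp (expH r E eps *m rho *m expH r E eps) W u ->
  opt_utility r E eps rho = complex.Re (\tr rho) / r - \sum_k expR (r * eps k) / r * u k.
Proof.
move=> r0 uE ymon [uW [umon rhoE]]; apply: sup_attained.
  have uEW := unitaryM uE (unitary_adj uW).
  exists (E *m adj W); split => //; rewrite (exp_utility_tr _ _ r0 uE uEW) rhoE.
  have -> : adj (E *m adj W) *m E = W by rewrite adjM adjK -mulmxA unitary_adj_mul ?mulmx1.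
  by rewrite tr_conjdiag_mul_same.
move=> _ [U [uU ->]]; rewrite (exp_utility_tr _ _ r0 uE uU) rhoE lerD2l lerN2.
exact: tr_conjdiag_mul_ge (unitaryM (unitary_adj uU) uE) uW ymon umon.
Qed.

Lemma opt_utility_ergotropy (r : R) n (E : 'M[C]_n) (eps : 'I_n -> R) (W rho V : 'M[C]_n)
    (v : 'I_n -> R) :
  r != 0 -> unitary E -> unitary W ->
  {homo (fun k => expR (r * eps k) / r) : k l / (k <= l)%N >-> k <= l} ->
  spec_decomp (expH r E eps *m rho *m expH r E eps) V v ->
  let Ht := W *m diagR (fun k => expR (r * eps k) / r) *m adj W in
  opt_utility r E eps rho =
  complex.Re (\tr rho) / r - complex.Re (\tr (Ht *m (expH r E eps *m rho *m expH r E eps)))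
  + ergotropy Ht (expH r E eps *m rho *m expH r E eps).
Proof.
move=> r0 uE uW ymon decV Ht; rewrite (opt_utility_conjdiag r0 uE ymon decV).
have [uV [vmon ->]] := decV.
by rewrite /Ht (ergotropy_conjdiag_tr uW uV ymon vmon) addrA subrK.
Qed.

Lemma ergotropy_conjdiag_ge0 n (W Wa : 'M[C]_n) (y u : 'I_n -> R) :
  unitary W -> unitary Wa ->
  {homo y : i j / (i <= j)%N >-> i <= j} ->
  {homo u : i j / (i <= j)%N >-> j <= i} ->
  0 <= ergotropy (W *m diagR y *m adj W) (Wa *m diagR u *m adj Wa).
Proof.
move=> uW uWa ymon umon; rewrite ergotropy_conjdiag_tr // subr_ge0.
exact: tr_conjdiag_mul_ge.
Qed.

End Optimization.

Section PartialTrace.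
Variable R : realType.
Local Notation C := R[i].

Lemma sum_mxtens_index m n (F : 'I_(m * n) -> C) :
  \sum_x F x = \sum_(i < m) \sum_(b < n) F (mxtens_index (i, b)).
Proof.
rewrite pair_big (reindex (@mxtens_index m n)) /=; first by apply: eq_bigr => -[i b].
by exists (@mxtens_unindex m n) => x _; rewrite (mxtens_indexK, mxtens_unindexK).
Qed.

Lemma tens1mxE m n (P : 'M[C]_n) i b i' b' :
  ((1%:M : 'M[C]_m) *t P) (mxtens_index (i, b)) (mxtens_index (i', b')) =
  (i == i')%:R * P b b'.
Proof. by rewrite tensmxE mxE. Qed.

Lemma ptraceA_sum m n I (r : seq I) (P : pred I) (F : I -> 'M[C]_(m * n)) :
  ptraceA (\sum_(a <- r | P a) F a) = \sum_(a <- r | P a) ptraceA (F a).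
Proof.
apply/matrixP => i j; rewrite !mxE summxE.
under eq_bigr do rewrite summxE.
by rewrite exchange_big; apply: eq_bigr => a _; rewrite mxE.
Qed.

Lemma ptraceA0 m n : ptraceA (0 : 'M[C]_(m * n)) = 0.
Proof. by apply/matrixP => i j; rewrite !mxE big1 // => b _; rewrite mxE. Qed.

Lemma ptraceA_tens1_mulC m n (P : 'M[C]_n) (M : 'M[C]_(m * n)) :
  ptraceA (((1%:M : 'M[C]_m) *t P) *m M) = ptraceA (M *m ((1%:M : 'M[C]_m) *t P)).
Proof.
apply/matrixP => i j; rewrite !mxE.
transitivity (\sum_(b < n) \sum_(b' < n) P b b' * M (mxtens_index (i, b')) (mxtens_index (j, b))).
  apply: eq_bigr => b _; rewrite mxE sum_mxtens_index.
  under eq_bigr do under eq_bigr do rewrite tens1mxE -mulrA.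
  by under eq_bigr do rewrite -mulr_sumr; rewrite sum_delta.
rewrite exchange_big; apply: eq_bigr => b _; rewrite mxE sum_mxtens_index exchange_big.
apply: eq_bigr => b' _; under eq_bigr do rewrite tens1mxE mulrCA eq_sym.
by rewrite sum_delta mulrC.
Qed.

Lemma sum_projA n (B : 'M[C]_n) : unitary B -> \sum_a projA B a = 1%:M.
Proof.
move=> /unitary_mul_adj <-; apply/matrixP => i j; rewrite summxE mxE.
by apply: eq_bigr => a _; rewrite /projA mxE big_ord1 !mxE.
Qed.

Lemma projA_idem n (B : 'M[C]_n) a : unitary B -> projA B a *m projA B a = projA B a.
Proof.
move=> /unitary_adj_mul /matrixP /(_ a a); rewrite !mxE eqxx => BBa.
have colBK : adj (col a B) *m col a B = 1%:M.
  by apply/matrixP => i j; rewrite !ord1 !mxE -BBa; apply: eq_bigr => k _; rewrite !mxE.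
by rewrite /projA mulmxA -(mulmxA (col a B)) colBK mulmx1.
Qed.

Lemma adj_tens m n p q (A : 'M[C]_(m, n)) (B : 'M[C]_(p, q)) : adj (A *t B) = adj A *t adj B.
Proof. by rewrite /adj trmx_tens map_mxT. Qed.

Lemma adj_liftA m n (B : 'M[C]_n) a : adj (liftA B a : 'M[C]_(m * n)) = liftA B a.
Proof. by rewrite /liftA adj_tens /projA adjM adjK /adj trmx1 map_mx1. Qed.

Lemma liftA_idem m n (B : 'M[C]_n) a : unitary B ->
  (liftA B a : 'M[C]_(m * n)) *m liftA B a = liftA B a.
Proof. by move=> uB; rewrite /liftA tensmx_mul mulmx1 projA_idem. Qed.

Lemma sum_liftA m n (B : 'M[C]_n) : unitary B -> \sum_a (liftA B a : 'M[C]_(m * n)) = 1%:M.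
Proof.
move=> uB; apply/matrixP => x y.
case: (mxtens_indexP x) => i b; case: (mxtens_indexP y) => i' b'.
rewrite summxE; under eq_bigr do rewrite tens1mxE.
rewrite -mulr_sumr -summxE sum_projA // !mxE (inj_eq (can_inj (@mxtens_indexK m n))).
by rewrite xpair_eqE -natrM mulnb.
Qed.

Lemma ptraceA_pinching m n (B : 'M[C]_n) (rho : 'M[C]_(m * n)) : unitary B ->
  ptraceA rho = \sum_a ptraceA (liftA B a *m rho *m liftA B a).
Proof.
move=> uB; under eq_bigr do
  rewrite -mulmxA /liftA ptraceA_tens1_mulC -mulmxA -/(liftA B _) liftA_idem //.
by rewrite -ptraceA_sum -mulmx_sumr sum_liftA // mulmx1.
Qed.

End PartialTrace.

Section Positivity.
Variable R : realType.
Local Notation C := R[i].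

Lemma psd_conj n (P N : 'M[C]_n) : adj P = P -> psd N -> psd (P *m N *m P).
Proof.
move=> hP [hN N_ge0]; split; first by rewrite /Defs.hermitian !adjM hP hN mulmxA.
move=> v; have -> : adj v *m (P *m N *m P) *m v = adj (P *m v) *m N *m (P *m v).
  by rewrite adjM hP !mulmxA.
exact: N_ge0.
Qed.

Lemma psd_form2 n (N : 'M[C]_n) x y c : psd N ->
  0 <= N x x + Num.conj c * N y x + c * (N x y + Num.conj c * N y y).
Proof.
case=> _ /(_ (\col_k ((x == k)%:R + (y == k)%:R * c))).
set v := \col_k _; suff -> : (adj v *m N *m v) 0 0 =
  N x x + Num.conj c * N y x + c * (N x y + Num.conj c * N y y) by [].
rewrite mxE; under eq_bigr => l _ do rewrite mxE.
under eq_bigr => l _ do under eq_bigr => k _ do rewrite !mxE rmorphD rmorphM !rmorph_nat.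
under eq_bigr => l _ do rewrite (sum_delta2 (N^~ l)) mxE mulrC.
by rewrite (sum_delta2 (fun l => N x l + Num.conj c * N y l)).
Qed.

Lemma ge0_Re_le0 (z : C) : 0 <= z -> complex.Re z <= 0 -> z = 0.
Proof.
case: z => a b; rewrite lecE /= => /andP[/eqP b0 a_ge0] a_le0.
by apply/eqP; rewrite eq_complex /= b0 eqxx andbT eq_le a_le0.
Qed.

Lemma psd_eq0 n (N : 'M[C]_n) : psd N -> complex.Re (\tr N) <= 0 -> N = 0.
Proof.
move=> psdN trN.
have diag_ge0 x : 0 <= N x x.
  by have := psd_form2 x x 0 psdN; rewrite rmorph0 !mul0r !addr0.
have diag0 x : N x x = 0.
  have tr0 : \tr N = 0 by apply: ge0_Re_le0 => //; apply: sumr_ge0.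
  exact: (psumr_eq0P (fun k _ => diag_ge0 k) tr0).
have hermE x y : N y x = Num.conj (N x y).
  by case: psdN => /matrixP /(_ y x) <- _; rewrite !mxE.
apply/matrixP => x y; rewrite mxE.
(* the form at [c = - (N x y)^*] is [- 2 |N x y|^2] *)
have := psd_form2 x y (- Num.conj (N x y)) psdN.
have conjNK : Num.conj (- Num.conj (N x y)) = - N x y.
  by rewrite rmorphN; congr (- _); exact: conjCK.
rewrite !diag0 (hermE x y) conjNK; move: (N x y) => z.
have -> : 0 + - z * Num.conj z + - Num.conj z * (z + - z * 0) = - (`|z| ^+ 2 *+ 2).
  by rewrite normCK; ring.
rewrite oppr_ge0 => le0; apply/eqP; rewrite -normr_eq0.
have /eqP : `|z| ^+ 2 *+ 2 = 0 by apply/le_anti; rewrite le0 mulrn_wge0 ?exprn_ge0.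
by rewrite mulrn_eq0 expf_eq0.
Qed.

Lemma liftA_sandwich_eq0 m n (B : 'M[C]_n) (rho : 'M[C]_(m * n)) a :
  unitary B -> psd rho -> prob B rho a <= 0 -> liftA B a *m rho *m liftA B a = 0.
Proof.
move=> uB psd_rho p_le0; apply: psd_eq0; first exact: psd_conj (adj_liftA m B a) psd_rho.
have -> : \tr (liftA B a *m rho *m liftA B a) = \tr (liftA B a *m rho).
  by rewrite mxtrace_mulC mulmxA liftA_idem.
exact: p_le0.
Qed.

Lemma sum_prob_cond_state m n (B : 'M[C]_n) (rho : 'M[C]_(m * n)) (K : 'M[C]_m) :
  unitary B -> psd rho ->
  \sum_(a < n | 0 < prob B rho a) prob B rho a * complex.Re (\tr (K *m cond_state B rho a))
  = complex.Re (\tr (K *m ptraceA rho)).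
Proof.
move=> uB psd_rho; rewrite (ptraceA_pinching rho uB) [in RHS](bigID (fun a => 0 < prob B rho a)) /=.
rewrite [X in _ + X]big1 => [|a]; last first.
  by rewrite -leNgt => /(liftA_sandwich_eq0 uB psd_rho) ->; rewrite ptraceA0.
rewrite addr0 mulmx_sumr (raddf_sum (@mxtrace _ _)) Re_sum; apply: eq_bigr => a p_gt0.
by rewrite /cond_state -scalemxAr mxtraceZ Re_RCM mulrA mulfV ?mul1r ?gt_eqF.
Qed.

End Positivity.

Unset Implicit Arguments.

Theorem lemma1 (R : realType) (dS dA : nat) (r : R)
    (E : 'M[R[i]]_dS) (eps : 'I_dS -> R)
    (B : 'M[R[i]]_dA) (rhoSA : 'M[R[i]]_(dS * dA)) :
  r != 0 ->
  (forall k l : 'I_dS, (k < l)%N -> eps k < eps l) ->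
  unitary E ->
  unitary B ->
  density rhoSA ->
  forall (W : 'M[R[i]]_dS) (u : 'I_dS -> R)
         (Wa : 'I_dA -> 'M[R[i]]_dS) (ua : 'I_dA -> 'I_dS -> R),
  spec_decomp (expH r E eps *m ptraceA rhoSA *m expH r E eps) W u ->
  (forall a : 'I_dA, 0 < prob B rhoSA a ->
     spec_decomp (expH r E eps *m cond_state B rhoSA a *m expH r E eps)
                 (Wa a) (ua a)) ->
  let y := fun k : 'I_dS => expR (r * eps k) / r in
  let Ht := W *m diagR y *m adj W in
  let rt := fun a : 'I_dA => expH r E eps *m cond_state B rhoSA a *m expH r E eps in
  [/\ daemonic_utility r E eps B rhoSA - opt_utility r E eps (ptraceA rhoSA)
        = \sum_(a < dA | 0 < prob B rhoSA a) prob B rhoSA a * ergotropy Ht (rt a),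
      0 <= \sum_(a < dA | 0 < prob B rhoSA a) prob B rhoSA a * ergotropy Ht (rt a)
    & forall a : 'I_dA, 0 < prob B rhoSA a ->
        ergotropy Ht (rt a)
        = \sum_(k < dS) \sum_(j < dS)
            ua a j * (sqnorm ((adj W *m Wa a) k j) - (j == k)%:R) * y k].
Proof.
move=> r0 eps_lt uE uB [psd_rho _] W u Wa ua decS decA y Ht rt.
have ymon := expR_div_homo r0 eps_lt.
have [uW [umon rhoSE]] := decS.
pose K := expH r E eps *m Ht *m expH r E eps.
have optE rho V v : spec_decomp (expH r E eps *m rho *m expH r E eps) V v ->
    opt_utility r E eps rho = complex.Re (\tr (1%:M *m rho)) / r
      - complex.Re (\tr (K *m rho)) + ergotropy Ht (expH r E eps *m rho *m expH r E eps).
  by move=> decV; rewrite mul1mx -mxtrace_sandwich (opt_utility_ergotropy r0 uE uW ymon decV).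
have ergS0 : ergotropy Ht (expH r E eps *m ptraceA rhoSA *m expH r E eps) = 0.
  rewrite rhoSE /Ht (ergotropy_conjdiag_tr uW uW ymon umon) tr_conjdiag_mul_same //.
  exact: subrr.
split.
- rewrite (optE _ _ _ decS) ergS0 addr0 /daemonic_utility.
  under eq_bigr => a p_gt0 do rewrite (optE _ _ _ (decA a p_gt0)) mulrDr mulrBr mulrA.
  rewrite big_split sumrB -mulr_suml !(sum_prob_cond_state _ uB psd_rho) /=.
  by rewrite addrAC subrr add0r.
- apply: sumr_ge0 => a /[dup] p_gt0 /decA [uWa [uma rtE]].
  apply: mulr_ge0; first exact: ltW.
  by rewrite /rt rtE; apply: ergotropy_conjdiag_ge0.
- move=> a /decA [uWa [uma rtE]].
  by rewrite /rt rtE ergotropy_conjdiag_sum.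
Qed.
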